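(* Let $H$ be a complex Hilbert space, $\varphi,\psi:[0,1]\to\mathbb{R}$ continuous, $A\in\mathbb{B}(H)$ and $t\in[0,1]$. Then $$\min\{|\varphi(t)+\psi(t)|,|\varphi(t)-\psi(t)|\}\,\omega(A)\le\omega_t(\varphi,\psi;A)\le\max\{|\varphi(t)+\psi(t)|,|\varphi(t)-\psi(t)|\}\,\omega(A),$$ and $$\frac12\min\{|\varphi(t)+\psi(t)|,|\varphi(t)-\psi(t)|\}\le n_t(\varphi,\psi;H)\le\frac12\max\{|\varphi(t)+\psi(t)|,|\varphi(t)-\psi(t)|\}.$$
   Context: $S_1(H)$ is the unit sphere of $H$, $\omega(T)=\sup_{x\in S_1(H)}|\langle Tx,x\rangle|$, $\omega_t(\varphi,\psi;A)=\sup_{x\in S_1(H)}|\langle(\varphi(t)A+\psi(t)A^* )x,x\rangle|$, and the weighted numerical index is $n_t(\varphi,\psi;H)=\inf\{\omega_t(\varphi,\psi;A):A\in\mathbb{B}(H),\ \|A\|=1\}$. *)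

From HB Require Import structures.
From mathcomp Require Import all_boot all_order all_algebra.
From mathcomp Require Import boolp classical_sets set_interval reals topology normedtype.
From mathcomp Require Import complex.
Set Implicit Arguments. Unset Strict Implicit. Unset Printing Implicit Defensive.
Import Order.TTheory GRing.Theory Num.Theory numFieldNormedType.Exports.
Local Open Scope ring_scope.
Local Open Scope classical_set_scope.

Section Hilbert.
Variable R : realType.
Local Notation C := R[i].

Definition cabs (z : C) : R := Normc.normc z.

Variable V : lmodType C.
Variable ip : V -> V -> C.

Definition is_inner_product : Prop :=
  [/\ forall (a : C) (x y z : V), ip (a *: x + y) z = a * ip x z + ip y z,
      forall x y : V, ip y x = (ip x y)^*%C,
      forall x : V, complex.Im (ip x x) = 0 /\ 0 <= complex.Re (ip x x)
    & forall x : V, ip x x = 0 -> x = 0].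

Definition hnorm (x : V) : R := Num.sqrt (complex.Re (ip x x)).

Definition hcomplete : Prop :=
  forall u : nat -> V,
    (forall e : R, 0 < e -> exists N, forall m n, (N <= m)%N -> (N <= n)%N ->
        hnorm (u m - u n) < e) ->
    exists l : V, forall e : R, 0 < e -> exists N, forall n, (N <= n)%N ->
        hnorm (u n - l) < e.

Definition is_Hilbert : Prop := is_inner_product /\ hcomplete.

Definition is_bounded_op (A : V -> V) : Prop :=
  (forall (a : C) (x y : V), A (a *: x + y) = a *: A x + A y) /\
  exists M : R, forall x, hnorm (A x) <= M * hnorm x.

Definition unit_sphere : set V := [set x | hnorm x = 1].

Definition opnorm (A : V -> V) : R := sup [set hnorm (A x) | x in unit_sphere].

Definition adjoint (A : V -> V) : V -> V :=
  xget (fun _ => 0) [set B : V -> V | forall x y, ip (A x) y = ip x (B y)].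

Definition numrad (T : V -> V) : R :=
  sup [set cabs (ip (T x) x) | x in unit_sphere].

Definition wnumrad (phi psi : R -> R) (t : R) (A : V -> V) : R :=
  numrad (fun x => ((phi t)%:C)%C *: A x + ((psi t)%:C)%C *: adjoint A x).

Definition wnumindex (phi psi : R -> R) (t : R) : R :=
  inf [set wnumrad phi psi t A | A in [set A | is_bounded_op A /\ opnorm A = 1]].

End Hilbert.

(* With z = <A x, x>, the form of the weighted operator at x is
   <(p A + q A^* ) x, x> = p z + q z^*, and p z + q z^* stretches the real and
   imaginary parts of z by p + q and p - q; taking suprema over the unit sphere
   gives the bounds on omega_t.  For the index, polarization gives
   ||A|| <= 2 omega(A), so omega(A) >= 1/2 whenever ||A|| = 1, while for an
   orthonormal pair e1, e2 the rank-one operator x |-> <x, e1> e2 has norm 1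
   and, by Bessel's inequality, numerical radius at most 1/2.  The adjoint
   exists by the Riesz representation theorem, proved by minimising the norm on
   the affine hyperplane {f = 1}. *)

From HB Require Import structures.
From mathcomp Require Import all_boot all_order all_algebra.
From mathcomp Require Import boolp classical_sets set_interval reals topology normedtype.
From mathcomp Require Import complex.
From mathcomp Require Import ring lra.
Set Implicit Arguments. Unset Strict Implicit. Unset Printing Implicit Defensive.
Import Order.TTheory GRing.Theory Num.Theory numFieldNormedType.Exports.
Local Open Scope ring_scope.
Local Open Scope classical_set_scope.
Local Open Scope complex_scope.
Local Notation Re := complex.Re.
Local Notation Im := complex.Im.

Lemma ler_of_sqr_le (R : realDomainType) (a b : R) :
  0 <= b -> a ^+ 2 <= b ^+ 2 -> a <= b.
Proof. by move=> b0 ab; nra. Qed.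

Lemma ltr_of_sqr_lt (R : realDomainType) (a b : R) :
  0 <= b -> a ^+ 2 < b ^+ 2 -> a < b.
Proof. by move=> b0 ab; nra. Qed.

Lemma sqrtrD_le (R : rcfType) (a b : R) :
  0 <= a -> 0 <= b -> Num.sqrt (a + b) <= Num.sqrt a + Num.sqrt b.
Proof.
move=> a0 b0; apply: ler_of_sqr_le; first by rewrite addr_ge0 ?sqrtr_ge0.
rewrite sqr_sqrtr ?addr_ge0 // sqrrD !sqr_sqrtr //.
by have := sqrtr_ge0 a; have := sqrtr_ge0 b; nra.
Qed.

Lemma eventually_invSn_lt (R : realType) (e : R) :
  0 < e -> exists N : nat, forall n, (N <= n)%N -> n.+1%:R^-1 < e.
Proof.
move=> e0; have [N] := ltr_add_invr e0; rewrite add0r => hN.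
by exists N => n Nn; apply: le_lt_trans hN; rewrite lef_pV2 ?posrE ?ler_nat.
Qed.

Section ComplexModulus.
Variable R : realType.
Implicit Types (r : R) (z w : R[i]).

Lemma cabsE z : cabs z = Num.sqrt (Re z ^+ 2 + Im z ^+ 2).
Proof. by case: z. Qed.

Lemma cabs_ge0 z : 0 <= cabs z.
Proof. by rewrite cabsE sqrtr_ge0. Qed.

Lemma cabs_sqr z : cabs z ^+ 2 = Re z ^+ 2 + Im z ^+ 2.
Proof. by rewrite cabsE sqr_sqrtr // addr_ge0 ?sqr_ge0. Qed.

Lemma cabsR r : cabs r%:C = `|r|.
Proof. by rewrite cabsE /= expr0n addr0 sqrtr_sqr. Qed.

Lemma cabsM z w : cabs (z * w) = cabs z * cabs w.
Proof. exact: Normc.normcM. Qed.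

Lemma cabsD z w : cabs (z + w) <= cabs z + cabs w.
Proof. exact: le_normcD. Qed.

Lemma cabsN z : cabs (- z) = cabs z.
Proof. exact: normcN. Qed.

Lemma cabsJ z : cabs z^*%C = cabs z.
Proof. by case: z => a b; rewrite !cabsE /= sqrrN. Qed.

Lemma cabs_i : cabs 'i = 1 :> R.
Proof. by rewrite cabsE /= expr0n add0r expr1n sqrtr1. Qed.

Lemma mulcJ z : z * z^*%C = (cabs z ^+ 2)%:C.
Proof.
rewrite cabs_sqr; case: z => a b /=; apply/eqP.
by rewrite eq_complex /=; apply/andP; split; apply/eqP; ring.
Qed.

Lemma conjcR r : r%:C^* = r%:C.
Proof. by rewrite /= oppr0. Qed.

Lemma conjc_i : 'i^*%C = - 'i :> R[i].
Proof. by apply/eqP; rewrite eq_complex /= oppr0 !eqxx. Qed.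

Lemma Re_mul z w : Re (z * w) = Re z * Re w - Im z * Im w.
Proof. by case: z; case: w. Qed.

Lemma Re_add z w : Re (z + w) = Re z + Re w.
Proof. by case: z; case: w. Qed.

Lemma Re_conjc z : Re z^* = Re z.
Proof. by case: z. Qed.

Lemma cabs_comb_conj (p q : R) z :
  Num.min `|p + q| `|p - q| * cabs z <= cabs (p%:C * z + q%:C * z^*%C) <=
  Num.max `|p + q| `|p - q| * cabs z.
Proof.
have sqr_le (x y : R) : 0 <= x -> x <= `|y| -> x ^+ 2 <= y ^+ 2.
  by move=> x0 xy; rewrite -(real_normK (num_real y)); nra.
have E : cabs (p%:C * z + q%:C * z^*%C) ^+ 2 =
    (p + q) ^+ 2 * Re z ^+ 2 + (p - q) ^+ 2 * Im z ^+ 2.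
  by rewrite cabs_sqr; case: z => a b /=; ring.
set m := Num.min _ _; set M := Num.max _ _.
have m0 : 0 <= m by rewrite le_min !normr_ge0.
have M0 : 0 <= M by rewrite le_max !normr_ge0.
have m1 : m ^+ 2 <= (p + q) ^+ 2 by rewrite sqr_le // ge_min lexx.
have m2 : m ^+ 2 <= (p - q) ^+ 2 by rewrite sqr_le // ge_min lexx orbT.
have M1 : (p + q) ^+ 2 <= M ^+ 2.
  rewrite -(real_normK (num_real (p + q))) sqr_le ?normr_ge0 //.
  by rewrite (ger0_norm M0) le_max lexx.
have M2 : (p - q) ^+ 2 <= M ^+ 2.
  rewrite -(real_normK (num_real (p - q))) sqr_le ?normr_ge0 //.
  by rewrite (ger0_norm M0) le_max lexx orbT.
have ha := sqr_ge0 (Re z); have hb := sqr_ge0 (Im z).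
apply/andP; split; apply: ler_of_sqr_le; rewrite ?mulr_ge0 ?cabs_ge0 //;
  rewrite exprMn E cabs_sqr; nra.
Qed.

End ComplexModulus.

Section SupScale.
Variables (R : realType) (T : Type) (D : set T) (f g : T -> R) (c : R).
Hypotheses (D_ne : D !=set0) (c_ge0 : 0 <= c).

Lemma sup_image_le_scale : has_ubound (f @` D) ->
  (forall x, D x -> g x <= c * f x) -> sup (g @` D) <= c * sup (f @` D).
Proof.
move=> fub gf; have [x0 Dx0] := D_ne; apply: ge_sup; first by exists (g x0), x0.
move=> _ [x Dx <-]; apply: le_trans (gf x Dx) _; rewrite ler_wpM2l //.
by apply: ub_le_sup => //; exists x.
Qed.

Lemma scale_sup_image_le : has_ubound (g @` D) ->
  (forall x, D x -> c * f x <= g x) -> c * sup (f @` D) <= sup (g @` D).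
Proof.
move=> gub fg; have [x0 Dx0] := D_ne.
have gsup x : D x -> g x <= sup (g @` D) by move=> Dx; apply: ub_le_sup => //; exists x.
have [c0|c0] := eqVneq c 0.
  by rewrite c0 mul0r; apply: le_trans (gsup _ Dx0); have := fg _ Dx0; rewrite c0 mul0r.
have cp : 0 < c by rewrite lt_def c0.
rewrite mulrC -ler_pdivlMr //; apply: ge_sup; first by exists (f x0), x0.
move=> _ [x Dx <-]; rewrite ler_pdivlMr // mulrC.
exact: le_trans (fg x Dx) (gsup x Dx).
Qed.

End SupScale.

Section InnerProduct.
Variables (R : realType) (V : lmodType R[i]) (ip : V -> V -> R[i]).
Hypothesis ip_inner : is_inner_product ip.
Local Notation hnorm := (hnorm ip).

Lemma ipZDl a x y z : ip (a *: x + y) z = a * ip x z + ip y z.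
Proof. by case: ip_inner. Qed.

Lemma ipC x y : ip y x = (ip x y)^*.
Proof. by case: ip_inner. Qed.

Lemma ip0l z : ip 0 z = 0.
Proof.
have := ipZDl 1 0 0 z; rewrite scaler0 addr0 mul1r => /eqP.
by rewrite -subr_eq subrr eq_sym => /eqP.
Qed.

Lemma ipDl x y z : ip (x + y) z = ip x z + ip y z.
Proof. by have := ipZDl 1 x y z; rewrite scale1r mul1r. Qed.

Lemma ipZl a x z : ip (a *: x) z = a * ip x z.
Proof. by rewrite -[a *: x]addr0 ipZDl ip0l addr0. Qed.

Lemma ipNl x z : ip (- x) z = - ip x z.
Proof. by rewrite -scaleN1r ipZl mulN1r. Qed.

Lemma ipBl x y z : ip (x - y) z = ip x z - ip y z.
Proof. by rewrite ipDl ipNl. Qed.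

Lemma ipDr x y z : ip z (x + y) = ip z x + ip z y.
Proof. by rewrite ipC ipDl rmorphD /= -!ipC. Qed.

Lemma ipZr a x z : ip z (a *: x) = a^*%C * ip z x.
Proof. by rewrite ipC ipZl rmorphM /= -ipC. Qed.

Lemma ipNr x z : ip z (- x) = - ip z x.
Proof. by rewrite ipC ipNl rmorphN /= -ipC. Qed.

Lemma ipBr x y z : ip z (x - y) = ip z x - ip z y.
Proof. by rewrite ipDr ipNr. Qed.

Lemma ip0r z : ip z 0 = 0.
Proof. by rewrite ipC ip0l conjc0. Qed.

Definition sqnorm x := Re (ip x x).

Lemma ipxx x : ip x x = (sqnorm x)%:C.
Proof.
have [_ _ /(_ x) [+ _] _] := ip_inner.
by rewrite /sqnorm; case: (ip x x) => a b /= ->.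
Qed.

Lemma sqnorm_ge0 x : 0 <= sqnorm x.
Proof. by case: ip_inner => _ _ /(_ x) []. Qed.

Lemma sqnorm_eq0 x : sqnorm x = 0 -> x = 0.
Proof. by move=> x0; case: ip_inner => _ _ _; apply; rewrite ipxx x0. Qed.

Lemma sqnorm_gt0 x : x != 0 -> 0 < sqnorm x.
Proof.
by move=> /eqP x0; rewrite lt_def sqnorm_ge0 andbT; apply/eqP => /sqnorm_eq0.
Qed.

Lemma sqnormD x y : sqnorm (x + y) = sqnorm x + sqnorm y + 2 * Re (ip x y).
Proof. by rewrite /sqnorm ipDl !ipDr [ip y x]ipC !Re_add Re_conjc; ring. Qed.

Lemma sqnormZ a x : sqnorm (a *: x) = cabs a ^+ 2 * sqnorm x.
Proof. by rewrite /sqnorm ipZl ipZr mulrA mulcJ ipxx Re_mul /= mulr0 subr0. Qed.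

Lemma sqnormN x : sqnorm (- x) = sqnorm x.
Proof. by rewrite /sqnorm ipNl ipNr opprK. Qed.

Lemma parallelogram x y :
  sqnorm (x - y) + sqnorm (x + y) = 2 * sqnorm x + 2 * sqnorm y.
Proof. by rewrite !sqnormD sqnormN ipNr; case: (ip x y) => a b /=; lra. Qed.

Lemma hnorm_sqr x : hnorm x ^+ 2 = sqnorm x.
Proof. exact/sqr_sqrtr/sqnorm_ge0. Qed.

Lemma hnorm_ge0 x : 0 <= hnorm x.
Proof. exact: sqrtr_ge0. Qed.

Lemma hnorm_gt0 x : x != 0 -> 0 < hnorm x.
Proof. by move=> /sqnorm_gt0; rewrite sqrtr_gt0. Qed.

Lemma hnorm0 : hnorm 0 = 0.
Proof. by rewrite /hnorm ip0l sqrtr0. Qed.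

Lemma hnormZ a x : hnorm (a *: x) = cabs a * hnorm x.
Proof.
rewrite /hnorm -/(sqnorm _) sqnormZ sqrtrM ?sqr_ge0 //.
by rewrite sqrtr_sqr ger0_norm ?cabs_ge0.
Qed.

Lemma hnorm_opp x : hnorm (- x) = hnorm x.
Proof. by rewrite /hnorm -!/(sqnorm _) sqnormN. Qed.

Lemma hnorm_unit x : x != 0 -> hnorm ((hnorm x)^-1%:C *: x) = 1.
Proof.
move=> /hnorm_gt0 x0.
by rewrite hnormZ cabsR ger0_norm ?invr_ge0 ?ltW // mulVf // gt_eqF.
Qed.

(* Expand [0 <= sqnorm (x + s y)] at the minimising [s = - Re <x, y> / sqnorm y]. *)
Lemma Re_ip_sqr_le x y : Re (ip x y) ^+ 2 <= sqnorm x * sqnorm y.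
Proof.
have [->|/sqnorm_gt0 q0] := eqVneq y 0.
  by rewrite ip0r /= expr0n mulr_ge0 ?sqnorm_ge0.
set r := Re (ip x y); set p := sqnorm x; set q := sqnorm y in q0 *.
have := sqnorm_ge0 (x + (- r / q)%:C *: y).
rewrite sqnormD sqnormZ cabsR ipZr Re_mul /= oppr0 mul0r subr0 -/p -/q -/r => h.
rewrite real_normK ?num_real // in h.
have : 0 <= q * (p + (- r / q) ^+ 2 * q + 2 * (- r / q * r)) by rewrite mulr_ge0 // ltW.
have -> : q * (p + (- r / q) ^+ 2 * q + 2 * (- r / q * r)) = p * q - r ^+ 2.
  by field; rewrite gt_eqF.
by rewrite subr_ge0.
Qed.

Lemma cabs_ip_le x y : cabs (ip x y) <= hnorm x * hnorm y.
Proof.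
apply: ler_of_sqr_le; first by rewrite mulr_ge0 ?hnorm_ge0.
have := Re_ip_sqr_le x (ip x y *: y).
rewrite ipZr mulrC mulcJ sqnormZ /= => h; rewrite exprMn !hnorm_sqr.
have [->|c0] := eqVneq (cabs (ip x y)) 0.
  by rewrite expr0n /= mulr_ge0 ?sqnorm_ge0.
rewrite -(@ler_pM2l _ (cabs (ip x y) ^+ 2)) ?exprn_gt0 ?lt_def ?c0 ?cabs_ge0 //.
by rewrite -expr2 mulrCA.
Qed.

Lemma ler_hnormD x y : hnorm (x + y) <= hnorm x + hnorm y.
Proof.
apply: ler_of_sqr_le; first by rewrite addr_ge0 ?hnorm_ge0.
rewrite hnorm_sqr sqnormD -!hnorm_sqr sqrrD.
have : Re (ip x y) <= hnorm x * hnorm y.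
  apply: ler_of_sqr_le; first by rewrite mulr_ge0 ?hnorm_ge0.
  by rewrite exprMn !hnorm_sqr Re_ip_sqr_le.
lra.
Qed.

Lemma sqnormB_le_midpoint x y d a b :
  d <= sqnorm (2^-1%:C *: (x + y)) -> sqnorm x <= d + a -> sqnorm y <= d + b ->
  sqnorm (x - y) <= 2 * a + 2 * b.
Proof.
rewrite sqnormZ cabsR ger0_norm ?invr_ge0 // expr2.
have := parallelogram x y; lra.
Qed.

Lemma Re_ip_eq0_of_min x v :
  (forall s : R, sqnorm x <= sqnorm (x + s%:C *: v)) -> Re (ip x v) = 0.
Proof.
set r := Re (ip x v); set q := sqnorm v => xmin.
have q0 : 0 <= q := sqnorm_ge0 v.
have := xmin (- r / (q + 1)).
rewrite sqnormD sqnormZ cabsR real_normK ?num_real // ipZr Re_mul /= oppr0 mul0r subr0.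
rewrite -/r -/q -addrA lerDl => h.
have : 0 <= (q + 1) ^+ 2 * ((- r / (q + 1)) ^+ 2 * q + 2 * (- r / (q + 1) * r)).
  by rewrite mulr_ge0 ?sqr_ge0.
have -> : (q + 1) ^+ 2 * ((- r / (q + 1)) ^+ 2 * q + 2 * (- r / (q + 1) * r)) =
    - (r ^+ 2 * (q + 2)) by field; lra.
rewrite oppr_ge0 => h2; apply/eqP; rewrite -sqrf_eq0 eq_le sqr_ge0 andbT.
by move: h2; have := sqr_ge0 r; move: (r ^+ 2) => c; nra.
Qed.

Lemma ip_eq0_of_min x v :
  (forall a : R[i], sqnorm x <= sqnorm (x + a *: v)) -> ip x v = 0.
Proof.
move=> xmin.
have re : Re (ip x v) = 0 by apply: Re_ip_eq0_of_min => s; apply: xmin.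
have im : Re (ip x ('i *: v)) = 0.
  by apply: Re_ip_eq0_of_min => s; rewrite scalerA; apply: xmin.
move: re im; rewrite ipZr Re_mul /=.
by case: (ip x v) => a b /= -> /eqP; rewrite !mul0r sub0r mulN1r opprK => /eqP ->.
Qed.

Lemma bessel2 e1 e2 x : sqnorm e1 = 1 -> sqnorm e2 = 1 -> ip e1 e2 = 0 ->
  cabs (ip x e1) ^+ 2 + cabs (ip x e2) ^+ 2 <= sqnorm x.
Proof.
move=> n1 n2 o12.
have o21 : ip e2 e1 = 0 by rewrite ipC o12 conjc0.
set a := ip x e1; set b := ip x e2; set p := a *: e1 + b *: e2.
have pe1 : ip (x - p) e1 = 0 by rewrite ipBl ipDl !ipZl ipxx n1 o21 -/a; ring.
have pe2 : ip (x - p) e2 = 0 by rewrite ipBl ipDl !ipZl ipxx n2 o12 -/b; ring.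
have xp : ip (x - p) p = 0 by rewrite ipDr !ipZr pe1 pe2; ring.
have np : sqnorm p = cabs a ^+ 2 + cabs b ^+ 2.
  by rewrite sqnormD !sqnormZ n1 n2 ipZl ipZr o12 !mulr0 /= addr0 !mulr1.
rewrite -(subrK p x) sqnormD xp np /= mulr0 addr0.
by rewrite lerDr sqnorm_ge0.
Qed.

Definition hcvg (u : nat -> V) (l : V) :=
  forall e, 0 < e -> exists N, forall n, (N <= n)%N -> hnorm (u n - l) < e.

Lemma hcvg_sqnorm_le u l c : 0 <= c -> hcvg u l ->
  (forall n, sqnorm (u n) <= c + n.+1%:R^-1) -> sqnorm l <= c.
Proof.
move=> c0 ul uc; rewrite -hnorm_sqr -(sqr_sqrtr c0).
rewrite ler_pXn2r ?nnegrE ?hnorm_ge0 ?sqrtr_ge0 //.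
apply/ler_addgt0Pr => e e0.
have e2 : 0 < e / 2 by rewrite divr_gt0.
have [N1 N1e] := eventually_invSn_lt (exprn_gt0 2 e2).
have [N2 N2e] := ul _ e2.
pose n := maxn N1 N2.
have un : hnorm (u n) <= Num.sqrt c + e / 2.
  apply: le_trans (ler_wsqrtr (uc n)) _.
  apply: le_trans (sqrtrD_le c0 _) _; first by rewrite invr_ge0.
  rewrite lerD2l -(ger0_norm (ltW e2)) -sqrtr_sqr ler_wsqrtr // ltW //.
  exact/N1e/leq_maxl.
have := N2e n (leq_maxr _ _); rewrite -hnorm_opp opprB.
have := ler_hnormD (u n) (l - u n); rewrite addrC subrK; lra.
Qed.

End InnerProduct.

Section Riesz.
Variables (R : realType) (V : lmodType R[i]) (ip : V -> V -> R[i]).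
Hypotheses (ip_inner : is_inner_product ip) (ip_complete : hcomplete ip).
Local Notation hnorm := (hnorm ip).
Local Notation sqnorm := (sqnorm ip).
Variables (f : V -> R[i]) (K : R).
Hypothesis f_linear : forall a x y, f (a *: x + y) = a * f x + f y.
Hypothesis f_bounded : forall x, cabs (f x) <= K * hnorm x.

Let f0 : f 0 = 0.
Proof.
have := f_linear 1 0 0; rewrite scaler0 addr0 mul1r => /eqP.
by rewrite -subr_eq subrr eq_sym => /eqP.
Qed.

Let fZ a x : f (a *: x) = a * f x.
Proof. by rewrite -[a *: x]addr0 f_linear f0 addr0. Qed.

Let fD x y : f (x + y) = f x + f y.
Proof. by have := f_linear 1 x y; rewrite scale1r mul1r. Qed.

Let fB x y : f (x - y) = f x - f y.
Proof. by rewrite fD -scaleN1r fZ mulN1r. Qed.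

Lemma hcvg_linear_const u l c : hcvg ip u l -> (forall n, f (u n) = c) -> f l = c.
Proof.
move=> ul uc; apply/eqP; rewrite -subr_eq0; apply/eqP/Normc.eq0_normc/eqP.
rewrite eq_le cabs_ge0 andbT; apply/ler_addgt0Pr => e e0; rewrite add0r.
have K1 : 0 < `|K| + 1 by rewrite ltr_pwDr ?normr_ge0.
have [N /(_ N (leqnn N))] := ul _ (divr_gt0 e0 K1).
rewrite ltr_pdivlMr // -(hnorm_opp ip_inner) opprB -(uc N) -fB -/(cabs _) => lN.
have := f_bounded (l - u N); have := ler_wpM2r (hnorm_ge0 ip (l - u N)) (ler_norm K).
have := hnorm_ge0 ip (l - u N); have := normr_ge0 K.
move: (hnorm _) (cabs _) (`|K|) lN => h z k *; nra.
Qed.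

(* A minimising sequence is Cauchy by the parallelogram law, since the midpoint
   of two points of the hyperplane lies on it. *)
Lemma hyperplane_min_sqnorm : (exists x1, f x1 = 1) ->
  exists2 x0, f x0 = 1 & forall x, f x = 1 -> sqnorm x0 <= sqnorm x.
Proof.
move=> [x1 fx1].
pose S := [set sqnorm x | x in [set x | f x = 1]].
have Slb : has_lbound S by exists 0 => _ [x _ <-]; exact: sqnorm_ge0.
have Sne : S !=set0 by exists (sqnorm x1), x1.
have d0 : 0 <= inf S by apply: lb_le_inf => // _ [x _ <-]; exact: sqnorm_ge0.
have dS x : f x = 1 -> inf S <= sqnorm x by move=> fx; apply: ge_inf => //; exists x.
have /choice [u uS] n : exists u, f u = 1 /\ sqnorm u <= inf S + n.+1%:R^-1.
  have n0 : 0 < n.+1%:R^-1 :> R by rewrite invr_gt0.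
  have [_ [u fu <-] ud] := inf_adherent n0 (conj Sne Slb).
  by exists u; split; rewrite ?ltW.
have ucauchy : forall e, 0 < e -> exists N, forall m n, (N <= m)%N -> (N <= n)%N ->
    hnorm (u m - u n) < e.
  move=> e e0; have e4 : 0 < e ^+ 2 / 4 by rewrite divr_gt0 // exprn_gt0.
  have [N Ne] := eventually_invSn_lt e4.
  exists N => m n Nm Nn; apply: ltr_of_sqr_lt; first exact: ltW.
  have [[um umS] [un unS]] := (uS m, uS n).
  have := sqnormB_le_midpoint ip_inner (dS _ _) umS unS.
  have half : (2^-1)%:C * (1 + 1) = 1 :> R[i].
    by rewrite -[1 + 1]/(2%:R) fmorphV rmorph_nat mulVf // pnatr_eq0.
  rewrite fZ fD um un => /(_ half).
  rewrite hnorm_sqr //; move: (Ne m Nm) (Ne n Nn).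
  by move: (m.+1%:R^-1) (n.+1%:R^-1) (e ^+ 2) (sqnorm _) => a b E s; lra.
have [l ul] := ip_complete ucauchy.
exists l; first exact: (hcvg_linear_const ul (fun n => (uS n).1)).
move=> x /dS; apply: le_trans; apply: (hcvg_sqnorm_le ip_inner d0 ul) => n.
exact: (uS n).2.
Qed.

Lemma riesz : exists y, forall x, f x = ip x y.
Proof.
have [f_eq0|/existsNP [x1 /eqP fx1]] := pselect (forall x, f x = 0).
  by exists 0 => x; rewrite f_eq0 ip0r.
have [|x0 fx0 x0min] := hyperplane_min_sqnorm.
  by exists ((f x1)^-1 *: x1); rewrite fZ mulVf.
have x0_orth w : f w = 0 -> ip w x0 = 0.
  move=> fw; rewrite (ipC ip_inner) (ip_eq0_of_min ip_inner) ?conjc0 // => a.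
  by apply: x0min; rewrite fD fZ fw mulr0 addr0.
have nx0 : sqnorm x0 != 0.
  apply/eqP => /(sqnorm_eq0 ip_inner) x00.
  by move: fx0; rewrite x00 f0 => /esym/eqP; rewrite oner_eq0.
exists ((sqnorm x0)^-1%:C *: x0) => x.
have := x0_orth (x - f x *: x0); rewrite fB fZ fx0 mulr1 subrr => /(_ erefl).
rewrite (ipBl ip_inner) (ipZl ip_inner) (ipxx ip_inner) => /eqP.
rewrite subr_eq0 => /eqP xx0.
by rewrite (ipZr ip_inner) conjcR xx0 mulrCA -rmorphM mulVf // mulr1.
Qed.

End Riesz.

Lemma adjointP (R : realType) (V : lmodType R[i]) (ip : V -> V -> R[i]) (A : V -> V) :
  is_Hilbert ip -> is_bounded_op ip A -> forall x y, ip (A x) y = ip x (adjoint ip A y).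
Proof.
move=> [ip_inner ip_complete] [A_linear [M AM]].
apply: (@xgetPex _ (fun _ => 0) [set B : V -> V | forall x y, ip (A x) y = ip x (B y)]).
suff /choice [B AB] : forall y, exists z, forall x, ip (A x) y = ip x z by exists B.
move=> y; apply: (@riesz _ _ _ ip_inner ip_complete _ (M * hnorm ip y)).
  by move=> a x x'; rewrite A_linear ipZDl.
move=> x; apply: le_trans (cabs_ip_le ip_inner _ _) _.
by rewrite mulrAC ler_wpM2r ?hnorm_ge0.
Qed.

Section BoundedOperators.
Variables (R : realType) (V : lmodType R[i]) (ip : V -> V -> R[i]) (A : V -> V).
Hypothesis A_bounded : is_bounded_op ip A.

Lemma bounded_op0 : A 0 = 0.
Proof.
have := A_bounded.1 1 0 0; rewrite scaler0 addr0 scale1r => /eqP.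
by rewrite -subr_eq subrr eq_sym => /eqP.
Qed.

Lemma bounded_opZ a x : A (a *: x) = a *: A x.
Proof. by have := A_bounded.1 a x 0; rewrite !addr0 bounded_op0 addr0. Qed.

Lemma bounded_opD x y : A (x + y) = A x + A y.
Proof. by have := A_bounded.1 1 x y; rewrite !scale1r. Qed.

Lemma bounded_opB x y : A (x - y) = A x - A y.
Proof. by rewrite bounded_opD -scaleN1r bounded_opZ scaleN1r. Qed.

End BoundedOperators.

Section NumericalRadius.
Variables (R : realType) (V : lmodType R[i]) (ip : V -> V -> R[i]).
Hypothesis ip_inner : is_inner_product ip.
Local Notation hnorm := (hnorm ip).
Local Notation sqnorm := (sqnorm ip).
Local Notation numrad := (numrad ip).
Variable A : V -> V.
Hypothesis A_bounded : is_bounded_op ip A.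

Lemma numrad_ub : has_ubound [set cabs (ip (A x) x) | x in unit_sphere ip].
Proof.
have [_ [M AM]] := A_bounded.
exists M => _ [x /= x1 <-]; apply: le_trans (cabs_ip_le ip_inner _ _) _.
by rewrite x1 mulr1; apply: le_trans (AM x) _; rewrite x1 mulr1.
Qed.

Lemma cabs_ip_diag_le x : cabs (ip (A x) x) <= numrad A * sqnorm x.
Proof.
have [->|x0] := eqVneq x 0.
  by rewrite (bounded_op0 A_bounded) (ip0l ip_inner) /sqnorm (ip0l ip_inner) mulr0 cabsR normr0.
set u := (hnorm x)^-1%:C *: x; have hx := hnorm_gt0 ip_inner x0.
have : cabs (ip (A u) u) <= numrad A.
  by apply: ub_le_sup; [exact: numrad_ub | exists u => //; exact: hnorm_unit].
rewrite (bounded_opZ A_bounded) (ipZl ip_inner) (ipZr ip_inner) conjcR mulrA !cabsM cabsR.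
rewrite ger0_norm ?invr_ge0 ?hnorm_ge0 // -(hnorm_sqr ip_inner) => Au.
have -> : cabs (ip (A x) x) =
    (hnorm x)^-1 * (hnorm x)^-1 * cabs (ip (A x) x) * hnorm x ^+ 2.
  by field; rewrite gt_eqF.
by rewrite ler_wpM2r ?sqr_ge0.
Qed.

Lemma polarization x y :
  let q v := ip (A v) v in
  4 * ip (A x) y = q (x + y) - q (x - y) + 'i * (q (x + 'i *: y) - q (x - 'i *: y)).
Proof.
move=> q; have qD v : q (x + v) = q x + ip (A x) v + ip (A v) x + q v.
  by rewrite /q (bounded_opD A_bounded) (ipDl ip_inner) !(ipDr ip_inner); ring.
have qB v : q (x - v) = q x - ip (A x) v - ip (A v) x + q v.
  by rewrite /q (bounded_opB A_bounded) (ipBl ip_inner) !(ipBr ip_inner); ring.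
rewrite !qB !qD (bounded_opZ A_bounded) (ipZl ip_inner) (ipZr ip_inner) conjc_i.
apply/eqP; rewrite -subr_eq0; apply/eqP.
transitivity (('i * 'i + 1) * (2 * (ip (A x) y - ip (A y) x))); first by ring.
by rewrite -expr2 sqr_i addNr mul0r.
Qed.

Lemma cabs_ip_op_le x y : cabs (ip (A x) y) <= numrad A * (sqnorm x + sqnorm y).
Proof.
have tri (a b c d : R[i]) :
    cabs (a - b + 'i * (c - d)) <= cabs a + cabs b + (cabs c + cabs d).
  apply: le_trans (cabsD _ _) _; rewrite cabsM cabs_i mul1r.
  by apply: lerD; apply: le_trans (cabsD _ _) _; rewrite cabsN.
have := tri (ip (A (x + y)) (x + y)) (ip (A (x - y)) (x - y))
  (ip (A (x + 'i *: y)) (x + 'i *: y)) (ip (A (x - 'i *: y)) (x - 'i *: y)).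
rewrite -polarization cabsM -(rmorph_nat (real_complex R)) cabsR normr_nat.
have := parallelogram ip_inner x y; have := parallelogram ip_inner x ('i *: y).
rewrite (sqnormZ ip_inner) cabs_i expr1n mul1r.
have := cabs_ip_diag_le (x + y); have := cabs_ip_diag_le (x - y).
have := cabs_ip_diag_le (x + 'i *: y); have := cabs_ip_diag_le (x - 'i *: y).
move: (cabs _) (cabs _) (cabs _) (cabs _) (cabs _) (numrad A) => *; nra.
Qed.

Lemma opnorm_le_2numrad : unit_sphere ip !=set0 -> opnorm ip A <= 2 * numrad A.
Proof.
move=> [x0 x0_unit].
have w0 : 0 <= numrad A.
  apply: le_trans (cabs_ge0 (ip (A x0) x0)) _.
  by apply: ub_le_sup; [exact: numrad_ub | exists x0].
apply: ge_sup; first by exists (hnorm (A x0)), x0.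
move=> _ [x /= x1 <-].
have [->|Ax0] := eqVneq (A x) 0; first by rewrite (hnorm0 ip_inner) mulr_ge0.
have hAx := hnorm_gt0 ip_inner Ax0.
have := cabs_ip_op_le x ((hnorm (A x))^-1%:C *: A x).
rewrite -!(hnorm_sqr ip_inner) x1 (hnorm_unit ip_inner) // expr1n.
rewrite (ipZr ip_inner) conjcR (ipxx ip_inner).
rewrite -rmorphM cabsR ger0_norm ?mulr_ge0 ?invr_ge0 ?sqnorm_ge0 ?hnorm_ge0 //.
rewrite -(hnorm_sqr ip_inner) expr2 mulKf ?gt_eqF //; lra.
Qed.

Lemma numrad_comb_adjoint (p q : R) : hcomplete ip -> unit_sphere ip !=set0 ->
  Num.min `|p + q| `|p - q| * numrad A <=
    numrad (fun x => p%:C *: A x + q%:C *: adjoint ip A x) <=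
  Num.max `|p + q| `|p - q| * numrad A.
Proof.
move=> ip_complete ne.
have key x : ip (p%:C *: A x + q%:C *: adjoint ip A x) x =
    p%:C * ip (A x) x + q%:C * (ip (A x) x)^*%C.
  rewrite (ipDl ip_inner) !(ipZl ip_inner) (ipC ip_inner x (adjoint ip A x)).
  by rewrite -(adjointP (conj ip_inner ip_complete) A_bounded).
have m0 : 0 <= Num.min `|p + q| `|p - q| by rewrite le_min !normr_ge0.
have M0 : 0 <= Num.max `|p + q| `|p - q| by rewrite le_max !normr_ge0.
have comb x := cabs_comb_conj p q (ip (A x) x).
apply/andP; split.
- apply: scale_sup_image_le => // [|x _]; last by rewrite key; case/andP: (comb x).
  have [b bub] := numrad_ub; exists (Num.max `|p + q| `|p - q| * b) => _ [x x1 <-].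
  rewrite key; apply: le_trans (proj2 (andP (comb x))) _.
  by rewrite ler_wpM2l // bub //; exists x.
- apply: sup_image_le_scale => // [|x _]; first exact: numrad_ub.
  by rewrite key; case/andP: (comb x).
Qed.

End NumericalRadius.

Section RankOne.
Variables (R : realType) (V : lmodType R[i]) (ip : V -> V -> R[i]).
Hypothesis ip_inner : is_inner_product ip.
Local Notation hnorm := (hnorm ip).
Variables (e1 e2 : V).

Definition rank_one : V -> V := fun x => ip x e1 *: e2.

Lemma rank_one_bounded : is_bounded_op ip rank_one.
Proof.
split=> [a x y|]; first by rewrite /rank_one (ipZDl ip_inner) scalerDl scalerA.
exists (hnorm e1 * hnorm e2) => x; rewrite (hnormZ ip_inner) mulrAC.
by apply: ler_wpM2r; rewrite ?hnorm_ge0 // mulrC cabs_ip_le.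
Qed.

Hypotheses (e1_unit : hnorm e1 = 1) (e2_unit : hnorm e2 = 1).

Lemma opnorm_rank_one : opnorm ip rank_one = 1.
Proof.
have le1 x : hnorm x = 1 -> hnorm (rank_one x) <= 1.
  move=> x1; rewrite (hnormZ ip_inner) e2_unit mulr1.
  by apply: le_trans (cabs_ip_le ip_inner _ _) _; rewrite x1 e1_unit mulr1.
apply/le_anti/andP; split.
  by apply: ge_sup => [|_ [x x1 <-]]; [exists (hnorm (rank_one e1)), e1 | exact: le1].
apply: ub_le_sup; first by exists 1 => _ [x x1 <-]; exact: le1.
exists e1 => //; rewrite (hnormZ ip_inner) e2_unit mulr1 (ipxx ip_inner).
by rewrite -(hnorm_sqr ip_inner) e1_unit expr1n cabsR normr1.
Qed.

Hypothesis e1_perp_e2 : ip e1 e2 = 0.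

Lemma numrad_rank_one_le : numrad ip rank_one <= 2^-1.
Proof.
have sq1 e : hnorm e = 1 -> sqnorm ip e = 1.
  by move=> e_unit; rewrite -(hnorm_sqr ip_inner) e_unit expr1n.
apply: ge_sup => [|_ [x /sq1 x1 <-]]; first by exists (cabs (ip (rank_one e1) e1)), e1.
have := bessel2 ip_inner x (sq1 _ e1_unit) (sq1 _ e2_unit) e1_perp_e2.
rewrite x1 /rank_one (ipZl ip_inner) cabsM (ipC ip_inner x e2) cabsJ.
have := sqr_ge0 (cabs (ip x e1) - cabs (ip x e2)); lra.
Qed.

End RankOne.

Local Close Scope complex_scope.
Unset Implicit Arguments.

Theorem theorem4p1 (R : realType) (V : lmodType R[i]) (ip : V -> V -> R[i])
  (HV : is_Hilbert ip)
  (Hdim : exists e1 e2 : V, [/\ hnorm ip e1 = 1, hnorm ip e2 = 1 & ip e1 e2 = 0])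
  (phi psi : R -> R)
  (Hphi : {within `[0%R, 1%R], continuous phi})
  (Hpsi : {within `[0%R, 1%R], continuous psi})
  (A : V -> V) (HA : is_bounded_op ip A)
  (t : R) (Ht : t \in `[0, 1]) :
  let m := Num.min `|phi t + psi t| `|phi t - psi t| in
  let M := Num.max `|phi t + psi t| `|phi t - psi t| in
  (m * numrad ip A <= wnumrad ip phi psi t A /\
   wnumrad ip phi psi t A <= M * numrad ip A) /\
  (m / 2 <= wnumindex ip phi psi t /\ wnumindex ip phi psi t <= M / 2).
Proof.
move=> m M; have [ip_inner ip_complete] := HV.
have [e1 [e2 [e1_unit e2_unit e1_perp_e2]]] := Hdim.
have sphere_ne : unit_sphere ip !=set0 by exists e1.
have m0 : 0 <= m by rewrite le_min !normr_ge0.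
have M0 : 0 <= M by rewrite le_max !normr_ge0.
have wbounds B : is_bounded_op ip B ->
    m * numrad ip B <= wnumrad ip phi psi t B <= M * numrad ip B.
  by move=> B_bounded; exact: numrad_comb_adjoint.
split; first exact/andP/wbounds.
pose W := [set wnumrad ip phi psi t B | B in
  [set B | is_bounded_op ip B /\ opnorm ip B = 1]].
have W_lb : lbound W (m / 2).
  move=> _ [B [B_bounded B_norm] <-].
  apply: le_trans (proj1 (andP (wbounds B B_bounded))).
  have := opnorm_le_2numrad ip_inner B_bounded sphere_ne; rewrite B_norm.
  by move=> numrad_ge; apply: ler_wpM2l => //; lra.
pose E := rank_one ip e1 e2.
have E_bounded : is_bounded_op ip E by exact: rank_one_bounded.
have W_E : W (wnumrad ip phi psi t E).
  by exists E => //; split; last exact: opnorm_rank_one.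
split; first exact: (lb_le_inf (ex_intro _ _ W_E) W_lb).
apply: le_trans (ge_inf (ex_intro _ _ W_lb) W_E) _.
apply: le_trans (proj2 (andP (wbounds E E_bounded))) _.
by apply: ler_wpM2l => //; exact: numrad_rank_one_le.
Qed.
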